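(* Let $A_0(z)$ be the unique function holomorphic near $z=0$ with $A_0(0)=0$ and $z(1+A_0(z))^3=A_0(z)$, define $A_k(z)$, $k\ge1$, by the recurrence below, and define $A_k[n]$ by $A_k(z)=(-1)^k\sum_{n\ge1}A_k[n]z^n$. Then for every $k=0,1,2,\dots$, the sequence $n\mapsto A_k[n]$ is monotonically increasing.
   Context: With $\delta_z=z\frac{d}{dz}$, for $k\ge0$: $$A_{k+1}=\frac{1+A_0}{2A_0-1}\Bigl(\delta_z^2A_k+\sum_{i+j=k}\bigl(A_i\delta_z^2A_j-\delta_zA_i\,\delta_zA_j\bigr)-3z\!\!\sum_{\substack{i+j=k+1\\ i,j\le k}}\!\!A_iA_j-z\!\!\!\sum_{\substack{j_1+j_2+j_3=k+1\\ j_1,j_2,j_3\le k}}\!\!\!A_{j_1}A_{j_2}A_{j_3}\Bigr),$$ all indices nonnegative. Equivalently, $(A_k)$ is the unique sequence of functions holomorphic in $|z|<4/27$ such that $\sum_kA_k(z)a^{-2k}$ formally solves $a^2(z(1+A)^3-A)=(1+A)\delta_z^2A-(\delta_zA)^2$. *)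

(* Formal power series over rat, represented by their
   coefficient sequences  a : nat -> rat  (a n = coefficient of z^n). *)
From mathcomp Require Import all_boot all_order all_algebra.
Set Implicit Arguments. Unset Strict Implicit. Unset Printing Implicit Defensive.
Import Order.TTheory GRing.Theory Num.Theory.
Local Open Scope ring_scope.

Definition series := nat -> rat.

Definition sconst (c : rat) : series := fun n => if n is 0 then c else 0.
Definition sadd (a b : series) : series := fun n => a n + b n.
Definition sscale (c : rat) (a : series) : series := fun n => c * a n.
Definition smul (a b : series) : series :=
  fun n => \sum_(i < n.+1) a i * b (n - i)%N.
Definition szmul (a : series) : series := fun n => if n is m.+1 then a m else 0.
(* the Euler operator delta_z = z d/dz *)
Definition sdelta (a : series) : series := fun n => n%:R * a n.

(* multiplicative inverse of a series with nonzero constant term: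
   b 0 = 1/a 0,  b n = -(1/a 0) * sum_{i=1}^n a i * b (n-i). *)
Fixpoint sinv_aux (a : series) (n : nat) : seq rat :=
  match n with
  | 0 => [:: (a 0%N)^-1]
  | m.+1 => let s := sinv_aux a m in
            rcons s (- (a 0%N)^-1 *
                     \sum_(i < m.+1) a i.+1 * nth 0 s (m - i)%N)
  end.
Definition sinv (a : series) : series := fun n => nth 0 (sinv_aux a n) n.

(* The bracket in the recurrence, for a family A : nat -> series and index k:
   delta^2 A_k + sum_{i+j=k} (A_i delta^2 A_j - delta A_i delta A_j)
   - 3 z sum_{i+j=k+1, i,j<=k} A_i A_j
   - z sum_{j1+j2+j3=k+1, j1,j2,j3<=k} A_j1 A_j2 A_j3 *)
Definition rec_bracket (A : nat -> series) (k : nat) : series := fun n =>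
  sdelta (sdelta (A k)) n
  + \sum_(i < k.+1) \sum_(j < k.+1 | (i + j == k)%N)
       (smul (A i) (sdelta (sdelta (A j))) n
        - smul (sdelta (A i)) (sdelta (A j)) n)
  - 3%:R * szmul (fun m => \sum_(i < k.+1) \sum_(j < k.+1 | (i + j == k.+1)%N)
                            smul (A i) (A j) m) n
  - szmul (fun m => \sum_(j1 < k.+1) \sum_(j2 < k.+1) \sum_(j3 < k.+1
                            | (j1 + j2 + j3 == k.+1)%N)
                            smul (smul (A j1) (A j2)) (A j3) m) n.

Definition rec_prefactor (A0 : series) : series :=
  smul (sadd (sconst 1) A0) (sinv (sadd (sscale 2%:R A0) (sconst (-1)))).

Definition Acoef (A : nat -> series) (k n : nat) : rat := (-1) ^+ k * A k n.

(* Put a := 1 + A_0, so that a = 1 + z a^3, and B_k := (-1)^k A_k.  Comparing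
   a = 1 + z a^3 coefficientwise, induction on n shows that the coefficients
   of a are nonnegative and nondecreasing; as 2 A_0 - 1 has constant term -1
   and nonnegative higher coefficients, its inverse has nonpositive
   coefficients, so P := -(1 + A_0)/(2 A_0 - 1) is nonnegative and
   nondecreasing too.  The recurrence reads B_{k+1} = P * (-1)^k [bracket_k],
   and (-1)^k [bracket_k] is nonnegative once B_0, ..., B_k are: all its terms
   are products of B_i's with nonnegative weights, except the sum over
   i + j = k of A_i delta^2 A_j - delta A_i delta A_j, whose coefficient at z^n
   becomes sum B_i[p] B_j[n-p] (p - (n-p))^2 / 2 after symmetrising under
   (i, p) <-> (j, n - p).  So every B_k is nonnegative, and the product of a
   nonnegative nondecreasing series with a nonnegative one is nondecreasing. *)

From mathcomp Require Import all_boot all_order all_algebra.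
From mathcomp Require Import ring lra zify.
Set Implicit Arguments. Unset Strict Implicit. Unset Printing Implicit Defensive.
Import Order.TTheory GRing.Theory Num.Theory.
Local Open Scope ring_scope.

Lemma smulS (f g : series) n :
  smul f g n.+1 = f 0%N * g n.+1 + \sum_(i < n.+1) f i.+1 * g (n - i)%N.
Proof. by rewrite /smul big_ord_recl. Qed.

Lemma smulZr c (f g : series) : smul f (sscale c g) =1 sscale c (smul f g).
Proof.
by move=> n; rewrite /smul /sscale mulr_sumr; apply: eq_bigr => i _; rewrite mulrCA.
Qed.

Lemma smulZ c d (f g : series) n :
  smul (sscale c f) (sscale d g) n = c * d * smul f g n.
Proof. by rewrite /smul mulr_sumr; apply: eq_bigr => i _; rewrite /sscale; ring. Qed.

Lemma smul_ge0 (f g : series) n :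
  (forall j, 0 <= f j) -> (forall j, 0 <= g j) -> 0 <= smul f g n.
Proof. by move=> f_ge0 g_ge0; apply: sumr_ge0 => i _; apply: mulr_ge0. Qed.

Lemma szmul_ge0 (f : series) n : (forall m, 0 <= f m) -> 0 <= szmul f n.
Proof. by case: n => [|n] /=. Qed.

Lemma mulr_szmul c (f : series) n : c * szmul f n = szmul (sscale c f) n.
Proof. by case: n => [|n] /=; rewrite ?mulr0. Qed.

Lemma sinvS (a : series) n :
  sinv a n.+1 = - (a 0%N)^-1 * \sum_(i < n.+1) a i.+1 * sinv a (n - i)%N.
Proof.
have size_aux m : size (sinv_aux a m) = m.+1.
  by elim: m => //= m IH; rewrite size_rcons IH.
have nth_aux m j : (j <= m)%N -> nth 0 (sinv_aux a m) j = sinv a j.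
  elim: m => [|m IH]; first by rewrite leqn0 => /eqP ->.
  rewrite leq_eqVlt => /orP[/eqP -> // | ltjm].
  by rewrite /= nth_rcons size_aux ltjm IH.
rewrite /sinv /= nth_rcons size_aux ltnn eqxx.
by congr (_ * _); apply: eq_bigr => i _; rewrite nth_aux ?leq_subr.
Qed.

Lemma sinv_le0 (a : series) : a 0%N < 0 -> (forall n, 0 <= a n.+1) ->
  forall n, sinv a n <= 0.
Proof.
move=> a0_lt0 a_ge0; elim/ltn_ind => -[_ | n IH].
  by rewrite /sinv /= ltW // invr_lt0.
rewrite sinvS mulr_ge0_le0 //.
  by rewrite oppr_ge0 ltW // invr_lt0.
rewrite -oppr_ge0 -sumrN; apply: sumr_ge0 => i _.
by rewrite -mulrN mulr_ge0 // oppr_ge0 IH // ltnS leq_subr.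
Qed.

Definition nneg_nondecr_upto (f : series) (n : nat) :=
  forall j, (j < n)%N -> 0 <= f j <= f j.+1.

Lemma nneg_nondecr_upto_ge0 (f : series) n : nneg_nondecr_upto f n.+1 ->
  forall j, (j <= n.+1)%N -> 0 <= f j.
Proof.
move=> f_mono j; rewrite leq_eqVlt => /orP[/eqP -> | /f_mono/andP[] //].
by have /andP[f_ge0 f_le] := f_mono n (ltnSn n); apply: le_trans f_le.
Qed.

Lemma smul_nneg_nondecr_upto (f g : series) n : nneg_nondecr_upto f n ->
  (forall j, (j <= n)%N -> 0 <= g j) -> nneg_nondecr_upto (smul f g) n.
Proof.
move=> f_mono g_ge0 j ltjn; have f_ge0 i : (i <= j)%N -> 0 <= f i.
  by move=> leij; have /andP[] := f_mono i (leq_ltn_trans leij ltjn).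
have g_ge0_sub i : 0 <= g (j - i)%N.
  by apply: g_ge0; apply: leq_trans (leq_subr i j) (ltnW ltjn).
apply/andP; split.
  by apply: sumr_ge0 => i _; rewrite mulr_ge0 ?f_ge0 // -ltnS.
rewrite smulS /smul ler_wpDl ?mulr_ge0 ?f_ge0 ?g_ge0 //.
apply: ler_sum => i _; rewrite ler_wpM2r //.
by have /andP[] := f_mono i (leq_ltn_trans (leq_ord i) ltjn).
Qed.

Lemma smul_nneg_nondecr (f g : series) : (forall n, 0 <= f n <= f n.+1) ->
  (forall n, 0 <= g n) -> forall n, 0 <= smul f g n <= smul f g n.+1.
Proof. by move=> f_mono g_ge0 n; apply: (smul_nneg_nondecr_upto (n := n.+1)). Qed.

Lemma cubic_fixpoint_nneg_nondecr (a : series) : a 0%N = 1 ->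
  (forall n, a n.+1 = smul (smul a a) a n) -> forall n, 0 <= a n <= a n.+1.
Proof.
move=> a0 aS; suff a_mono n : nneg_nondecr_upto a n by move=> n; apply: (a_mono n.+1).
elim: n => [// | n IH] j; rewrite ltnS leq_eqVlt => /orP[/eqP -> | /IH //].
case: n IH => [_ | n IH].
  by rewrite aS /smul !big_ord1 a0 !mul1r ler01 lexx.
have a_ge0 := nneg_nondecr_upto_ge0 IH.
have a2_mono := smul_nneg_nondecr_upto IH a_ge0.
by rewrite !aS; apply: (smul_nneg_nondecr_upto a2_mono a_ge0).
Qed.

Lemma opp_rec_prefactor_nneg_nondecr (A0 : series) : A0 0%N = 0 ->
  (forall n, 0 <= A0 n) ->
  (forall n, 0 <= sadd (sconst 1) A0 n <= sadd (sconst 1) A0 n.+1) ->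
  forall n, 0 <= sscale (-1) (rec_prefactor A0) n
                 <= sscale (-1) (rec_prefactor A0) n.+1.
Proof.
move=> A00 A0_ge0 a_mono n; set d := sadd (sscale 2%:R A0) (sconst (-1)).
have d_inv_le0 : forall n, sinv d n <= 0.
  apply: sinv_le0 => [|m]; first by rewrite /d /sadd /sscale A00 mulr0 add0r ltrN10.
  by rewrite /d /sadd /sscale addr0 mulr_ge0.
rewrite -!smulZr; apply: smul_nneg_nondecr => // m.
by rewrite /sscale mulN1r oppr_ge0.
Qed.

Lemma big_addn_eq_rev_ord (R : nmodType) k (F : 'I_k.+1 -> R) (i : 'I_k.+1) :
  \sum_(j < k.+1 | (i + j == k)%N) F j = F (rev_ord i).
Proof.
rewrite (big_pred1 (rev_ord i)) // => j; rewrite /= -val_eqE /= subSS.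
by move: (ltn_ord i) => lt_ik; apply/eqP/eqP; lia.
Qed.

Lemma sum_ord2_sym_ge0 (R : numDomainType) k n (F : 'I_k.+1 -> 'I_n.+1 -> R) :
  (forall i p, 0 <= F i p + F (rev_ord i) (rev_ord p)) ->
  0 <= \sum_(i < k.+1) \sum_(p < n.+1) F i p.
Proof.
move=> Fsym_ge0.
have rev2 : \sum_(i < k.+1) \sum_(p < n.+1) F i p
            = \sum_(i < k.+1) \sum_(p < n.+1) F (rev_ord i) (rev_ord p).
  rewrite (reindex_inj rev_ord_inj); apply: eq_bigr => i _.
  exact: (reindex_inj rev_ord_inj).
rewrite -(pmulr_rge0 _ (ltr0n R 2)) mulr2n mulrDl mul1r {2}rev2 -big_split.
by apply: sumr_ge0 => i _; rewrite -big_split; apply: sumr_ge0 => p _ /=.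
Qed.

Lemma convolution_quadratic_ge0 (B : nat -> series) k n :
  (forall i, (i <= k)%N -> forall p, 0 <= B i p) ->
  0 <= \sum_(i < k.+1) \sum_(p < n.+1) B i p * B (k - i)%N (n - p)%N
                                     * ((n - p)%N%:R ^+ 2 - p%:R * (n - p)%N%:R).
Proof.
move=> B_ge0; apply: sum_ord2_sym_ge0 => i p /=.
have [le_ik le_pn] : (i <= k)%N /\ (p <= n)%N by split; rewrite -ltnS.
rewrite !subSS !subKn //.
have -> : forall x y : rat, B i p * B (k - i)%N (n - p)%N * (y ^+ 2 - x * y)
    + B (k - i)%N (n - p)%N * B i p * (x ^+ 2 - y * x)
    = B i p * B (k - i)%N (n - p)%N * (x - y) ^+ 2 by move=> x y; ring.
by rewrite mulr_ge0 ?sqr_ge0 ?mulr_ge0 ?B_ge0 ?leq_subr.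
Qed.

Section AlternatingCoefficients.

Variable A : nat -> series.

Lemma smul_Acoef i j n :
  smul (Acoef A i) (Acoef A j) n = (-1) ^+ (i + j) * smul (A i) (A j) n.
Proof. by rewrite exprD; apply: smulZ. Qed.

Lemma smul3_Acoef i j l n :
  smul (smul (Acoef A i) (Acoef A j)) (Acoef A l) n
  = (-1) ^+ (i + j + l) * smul (smul (A i) (A j)) (A l) n.
Proof.
rewrite /smul mulr_sumr; apply: eq_bigr => p _.
rewrite !mulr_suml mulr_sumr; apply: eq_bigr => q _; rewrite /Acoef !exprD; ring.
Qed.

Lemma bracket_ge0 k n :
  (forall i, (i <= k)%N -> forall p, 0 <= Acoef A i p) ->
  0 <= (-1) ^+ k * rec_bracket A k n.
Proof.
move=> sign_ge0; set s : rat := (-1) ^+ k.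
have Ns : - s = (-1) ^+ k.+1 by rewrite exprS mulN1r.
rewrite /rec_bracket.
set Y := \sum_(i < k.+1) _; set Z := szmul _ n; set W := szmul _ n.
have X_ge0 : 0 <= s * sdelta (sdelta (A k)) n.
  have -> : s * sdelta (sdelta (A k)) n = n%:R * n%:R * Acoef A k n.
    by rewrite /sdelta /Acoef /s; ring.
  by apply: mulr_ge0; [rewrite mulr_ge0 | apply: sign_ge0].
have Y_ge0 : 0 <= s * Y.
  have -> : s * Y = \sum_(i < k.+1) \sum_(p < n.+1)
      Acoef A i p * Acoef A (k - i)%N (n - p)%N
      * ((n - p)%N%:R ^+ 2 - p%:R * (n - p)%N%:R).
    rewrite /Y mulr_sumr; apply: eq_bigr => i _; rewrite big_addn_eq_rev_ord /= subSS.
    have -> : s = (-1) ^+ i * (-1) ^+ (k - i) by rewrite -exprD subnKC // -ltnS.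
    rewrite /smul /sdelta -sumrB mulr_sumr; apply: eq_bigr => p _.
    by rewrite /Acoef; ring.
  exact: convolution_quadratic_ge0.
have Z_ge0 : 0 <= - s * Z.
  rewrite /Z mulr_szmul; apply: szmul_ge0 => m; rewrite /sscale mulr_sumr.
  apply: sumr_ge0 => i _; rewrite mulr_sumr; apply: sumr_ge0 => j /eqP ij.
  have -> : - s = (-1) ^+ (i + j) by rewrite Ns ij.
  rewrite -smul_Acoef; apply: smul_ge0 => p; apply: sign_ge0; rewrite -ltnS //.
have W_ge0 : 0 <= - s * W.
  rewrite /W mulr_szmul; apply: szmul_ge0 => m; rewrite /sscale mulr_sumr.
  apply: sumr_ge0 => i _; rewrite mulr_sumr; apply: sumr_ge0 => j _.
  rewrite mulr_sumr; apply: sumr_ge0 => l /eqP ijl.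
  have -> : - s = (-1) ^+ (i + j + l) by rewrite Ns ijl.
  rewrite -smul3_Acoef; apply: smul_ge0 => p; last by apply: sign_ge0; rewrite -ltnS.
  by apply: smul_ge0 => q; apply: sign_ge0; rewrite -ltnS.
lra.
Qed.

Lemma Acoef_ge0 (P : series) :
  (forall p, 0 <= P p) -> (forall p, 0 <= A 0%N p) ->
  (forall k n, Acoef A k.+1 n = smul P (sscale ((-1) ^+ k) (rec_bracket A k)) n) ->
  forall k n, 0 <= Acoef A k n.
Proof.
move=> P_ge0 A0_ge0 Acoef_succ k n.
suff ge0_upto : forall i, (i <= k)%N -> forall p, 0 <= Acoef A i p by exact: ge0_upto.
elim: k => [|k IH] i; first by rewrite leqn0 => /eqP -> p; rewrite /Acoef mul1r.
rewrite leq_eqVlt => /orP[/eqP -> p | /IH //].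
by rewrite Acoef_succ smul_ge0 // => j; apply: bracket_ge0.
Qed.

End AlternatingCoefficients.

Theorem proposition4 (A : nat -> series) :
  (* A_0(0) = 0 and z (1 + A_0)^3 = A_0 *)
  A 0%N 0%N = 0 ->
  (forall n : nat,
     szmul (smul (smul (sadd (sconst 1) (A 0%N)) (sadd (sconst 1) (A 0%N)))
                 (sadd (sconst 1) (A 0%N))) n = A 0%N n) ->
  (* the recurrence for A_{k+1}, k >= 0 *)
  (forall (k n : nat),
     A k.+1 n = smul (rec_prefactor (A 0%N)) (rec_bracket A k) n) ->
  forall (k n : nat), (1 <= n)%N -> Acoef A k n <= Acoef A k n.+1.
Proof.
move=> A00 A0_cubic Arec.
set a := sadd (sconst 1) (A 0%N) in A0_cubic.
have aE n : (0 < n)%N -> a n = A 0%N n by case: n => // n _; rewrite /a /sadd add0r.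
have a_mono : forall n, 0 <= a n <= a n.+1.
  apply: cubic_fixpoint_nneg_nondecr => [|n]; first by rewrite /a /sadd A00 addr0.
  by rewrite aE // -A0_cubic.
have A0_ge0 n : 0 <= A 0%N n.
  by case: n => [|n]; [rewrite A00 | rewrite -aE //; case/andP: (a_mono n.+1)].
set P := sscale (-1) (rec_prefactor (A 0%N)).
have P_mono := opp_rec_prefactor_nneg_nondecr A00 A0_ge0 a_mono.
have P_ge0 n : 0 <= P n by case/andP: (P_mono n).
have Acoef_succ k n :
    Acoef A k.+1 n = smul P (sscale ((-1) ^+ k) (rec_bracket A k)) n.
  by rewrite smulZ /Acoef Arec exprS.
case=> [|k] n n_gt0; first by rewrite /Acoef !mul1r -!aE //; case/andP: (a_mono n).
have bracket_sign_ge0 p : 0 <= sscale ((-1) ^+ k) (rec_bracket A k) p.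
  by apply: bracket_ge0 => i _ q; apply: Acoef_ge0 P_ge0 A0_ge0 Acoef_succ i q.
by rewrite !Acoef_succ; case/andP: (smul_nneg_nondecr P_mono bracket_sign_ge0 n).
Qed.
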